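(* Let $E$ be a finite directed graph and $KE$ its path algebra. Then (i) $\mathrm{GKdim}(KE)=0$ if and only if $KE$ is finite-dimensional; (ii) if $0\neq\mathrm{GKdim}(KE)<\infty$, then $\mathrm{h}_{\mathrm{alg}}(KE)=0$ and $KE$ is infinite-dimensional.
   Context: A finite directed graph $E=(E^0,E^1,s,r)$ has finitely many vertices and edges, with source and range maps $s,r:E^1\to E^0$. Paths are finite sequences $e_1\cdots e_n$ of edges with $r(e_i)=s(e_{i+1})$; vertices are paths of length $0$. The path algebra $KE$ over a field $K$ has basis all paths with concatenation product (zero when not composable); its standard filtration $V_n$ is the span of paths of length $\le n$. $\mathrm{h}_{\mathrm{alg}}(KE)=0$ if $KE$ is finite-dimensional and $\limsup_n\frac1n\log\dim(V_n/V_{n-1})$ otherwise. $\mathrm{GKdim}(A)=\limsup_{n}\log\dim(V^n)/\log n$ for a finite-dimensional generating subspace $V$ of the algebra $A$, where $V^n$ is the span of products of at most $n$ elements of $V$ (and $\mathrm{GKdim}(A)=\infty$ if the growth is not polynomially bounded). *)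

From HB Require Import structures.
From mathcomp Require Import all_boot all_order all_algebra.
From mathcomp Require Import all_classical all_reals all_analysis.
Set Implicit Arguments. Unset Strict Implicit. Unset Printing Implicit Defensive.
Import Order.TTheory GRing.Theory Num.Theory.

(* A finite directed graph E = (E^0, E^1, s, r) is given by finite types
   [V] (vertices) and [Ed] (edges) with source/range maps [s r : Ed -> V].

   A path is encoded as a pair (v, es) : V * seq Ed:
   - (v, [::]) is the vertex v (path of length 0);
   - (v, e_1 :: ... :: e_n) with s e_1 = v and r e_i = s e_{i+1} is the path
     e_1 ... e_n (v is then determined by the path).
   This is a bijection with the set of paths of E. *)
Definition is_path (V Ed : finType) (s r : Ed -> V) (v : V) (es : seq Ed) : bool :=
  if es is e :: es' then (s e == v) && path (fun e f => r e == s f) e es'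
  else true.

Definition paths_le (V Ed : finType) (s r : Ed -> V) (n : nat) :=
  {p : V * n.-bseq Ed | is_path s r p.1 p.2}.

(* The K-subspace V_n of KE spanned by paths of length <= n is the free
   K-vector space on [paths_le s r n]; dim V_n is its dimension. *)
Definition dim_Vn (K : fieldType) (V Ed : finType) (s r : Ed -> V) (n : nat) : nat :=
  \dim (fullv : {vspace {ffun paths_le s r n -> K^o}}).

(* dim (V_n / V_{n-1}), with V_{-1} = 0. *)
Definition dim_grad (K : fieldType) (V Ed : finType) (s r : Ed -> V) (n : nat) : nat :=
  if n is m.+1 then dim_Vn K s r n - dim_Vn K s r m else dim_Vn K s r 0.

(* KE is finite-dimensional iff its basis (the set of all paths) is finite. *)
Definition pathalg_findim (V Ed : finType) (s r : Ed -> V) : Prop :=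
  exists l : seq (V * seq Ed), forall v es, is_path s r v es -> (v, es) \in l.

(* GK dimension of KE computed with the generating subspace V = V_1
   (span of vertices and edges), for which V^n = V_n. *)
Definition GKdim_pathalg (R : realType) (K : fieldType) (V Ed : finType)
    (s r : Ed -> V) : \bar R :=
  limn_esup (fun n => ((ln (dim_Vn K s r n)%:R) / (ln n%:R))%:E).

Definition halg_pathalg (R : realType) (K : fieldType) (V Ed : finType)
    (s r : Ed -> V) : \bar R :=
  if `[< pathalg_findim s r >] then 0%E
  else limn_esup (fun n => ((n%:R)^-1 * ln ((dim_grad K s r n)%:R : R))%:E).

(* The dimension of V_n is the number of paths of length at most n.  If KE is
   finite-dimensional this number is bounded, so ln dim V_n / ln n tends to 0.
   Otherwise there are arbitrarily long paths, and the n + 1 prefixes of length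
   0, ..., n of one of them give dim V_n > n, hence GKdim KE >= 1: the GK
   dimension vanishes exactly in the finite-dimensional case.  If moreover
   GKdim KE < oo, then dim V_n <= n^M for large n, so
   (1/n) ln dim (V_n / V_(n-1)) <= M ln n / n tends to 0. *)
From HB Require Import structures.
From mathcomp Require Import all_boot all_order all_algebra.
From mathcomp Require Import all_classical all_reals all_analysis.
From mathcomp Require Import lra.
Set Implicit Arguments. Unset Strict Implicit. Unset Printing Implicit Defensive.
Import Order.TTheory GRing.Theory Num.Theory.

Section PathCount.
Variables (V Ed : finType) (s r : Ed -> V).

Definition path_of n (p : paths_le s r n) : V * seq Ed := ((val p).1, val (val p).2).

Lemma path_of_inj n : injective (@path_of n).
Proof.
move=> [[v1 b1] h1] [[v2 b2] h2]; rewrite /path_of /= => -[e1 e2].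
by apply: val_inj; congr (_, _) => //; apply: val_inj.
Qed.

Lemma dim_VnE (K : fieldType) n : dim_Vn K s r n = #|{: paths_le s r n}|.
Proof. by rewrite /dim_Vn dimvf; exact: muln1. Qed.

Lemma dim_grad_le (K : fieldType) n : dim_grad K s r n <= dim_Vn K s r n.
Proof. by case: n => [|n] //=; rewrite leq_subr. Qed.

Lemma card_paths_le_bounded :
  pathalg_findim s r -> exists C, forall n, #|{: paths_le s r n}| <= C.
Proof.
move=> [l hl]; exists (size l) => n.
rewrite cardE -(size_map (@path_of n)); apply: uniq_leq_size.
  by rewrite map_inj_uniq ?enum_uniq //; exact: path_of_inj.
by move=> _ /mapP [[[v b] h] _ ->]; apply: hl.
Qed.

Lemma is_path_take v es k : is_path s r v es -> is_path s r v (take k es).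
Proof.
case: es => [|e es] //; case: k => [|k] //= /andP [-> hp] /=.
exact: take_path.
Qed.

Lemma exists_long_path :
  ~ pathalg_findim s r -> forall n, exists v es, is_path s r v es /\ n <= size es.
Proof.
move=> nf n; apply: contrapT => no_long; apply: nf.
exists (map (@path_of n) (enum {: paths_le s r n})) => v es hp.
have es_le : size es <= n.
  by rewrite leqNgt; apply/negP => /ltnW n_le; apply: no_long; exists v, es.
have -> : (v, es) = path_of (Sub (v, Bseq es_le) hp : paths_le s r n) by [].
by apply: map_f; rewrite mem_enum.
Qed.

Lemma card_paths_le_gt : ~ pathalg_findim s r -> forall n, n < #|{: paths_le s r n}|.
Proof.
move=> nf n; have [v [es [hp hn]]] := exists_long_path nf n.
have size_prefix (k : 'I_n.+1) : size (take k es) = k.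
  by rewrite size_takel // (leq_trans _ hn) // -ltnS.
have prefix_le (k : 'I_n.+1) : size (take k es) <= n by rewrite size_prefix -ltnS.
pose prefix (k : 'I_n.+1) : paths_le s r n :=
  exist _ (v, Bseq (prefix_le k)) (is_path_take k hp).
have prefix_inj : injective prefix.
  move=> k1 k2 /(congr1 (fun p => size (path_of p).2)).
  by rewrite /= !size_prefix => /val_inj.
by rewrite -[n.+1]card_ord; exact: leq_card prefix_inj.
Qed.

End PathCount.
Local Open Scope ring_scope.

Section LimnEsup.
Variable R : realType.
Implicit Types u : (\bar R)^nat.
Local Open Scope ereal_scope.

Lemma limn_esup_eq0 u : (forall n, 0 <= u n) ->
    (forall e : R, (0 < e)%R -> exists N, forall n, (N <= n)%N -> u n <= e%:E) ->
  limn_esup u = 0.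
Proof.
move=> u0 ue; apply/eqP; rewrite eq_le; apply/andP; split; last first.
  rewrite limn_esup_lim; apply: lime_ge; first exact: is_cvg_esups.
  apply: nearW => n; apply: le_trans (u0 n) _.
  by apply: ereal_sup_ubound; exists n => /=.
apply/lee_addgt0Pr => e e0; rewrite add0e; have [N hN] := ue e e0.
rewrite limn_esup_lim; apply: lime_le; first exact: is_cvg_esups.
near=> n; apply: ge_ereal_sup => _ [k /= nk <-]; apply: hN.
by apply: leq_trans nk; near: n; exists N.
Unshelve. all: by end_near. Qed.

Lemma limn_esup_ge u a N : (forall n, (N <= n)%N -> a <= u n) -> a <= limn_esup u.
Proof.
move=> h; rewrite limn_esup_lim; apply: lime_ge; first exact: is_cvg_esups.
near=> n; apply: le_trans (h n _) _; last first.
  by apply: ereal_sup_ubound; exists n => /=.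
by near: n; exists N.
Unshelve. all: by end_near. Qed.

Lemma limn_esup_fin_eventually_ub u : (forall n, 0 <= u n) -> limn_esup u < +oo ->
  exists2 M : R, (0 <= M)%R & exists N, forall n, (N <= n)%N -> u n <= M%:E.
Proof.
move=> u0; rewrite limn_esup_lim (cvg_lim _ (@cvg_esups_inf _ u)) //.
move=> /ereal_inf_lt [_ [N _ <-] esups_lty].
have uN : u N <= esups u N by apply: ereal_sup_ubound; exists N => /=.
have esups_ge0 : 0 <= esups u N := le_trans (u0 N) uN.
have esups_fin : esups u N \is a fin_num by rewrite ge0_fin_numE.
exists (fine (esups u N)); first by rewrite -lee_fin fineK.
by exists N => n Nn; rewrite fineK //; apply: ereal_sup_ubound; exists n => /=.
Qed.

End LimnEsup.

Section LnGrowth.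
Variable R : realType.

Lemma ln_nat_ge0 k : 0 <= ln (k%:R : R).
Proof. by case: k => [|k]; [rewrite ln0 | apply: ln_ge0; rewrite ler1n]. Qed.

Lemma ler_ln_nat a b : (a <= b)%N -> ln (a%:R : R) <= ln b%:R.
Proof.
case: a => [|a] ab; first by rewrite ln0 // ln_nat_ge0.
by rewrite ler_ln ?ler_nat // posrE ltr0n // (leq_trans _ ab).
Qed.

Lemma div_ln_nat_eventually_le (L e : R) : 0 <= L -> 0 < e ->
  exists N, forall n, (N <= n)%N -> L / ln n%:R <= e.
Proof.
move=> L0 e0; exists (Num.truncn (expR (L / e))).+1 => n Nn.
have Le0 : 0 <= L / e by rewrite divr_ge0 // ltW.
have exp_lt_n : expR (L / e) < n%:R.
  by apply: lt_le_trans (truncnS_gt _) _; rewrite ler_nat.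
have Le_lt_ln : L / e < ln n%:R.
  rewrite -[X in X < _]expRK ltr_ln // posrE ?expR_gt0 //.
  exact: lt_trans (expR_gt0 _) exp_lt_n.
have ln_gt0 : 0 < ln (n%:R : R) := le_lt_trans Le0 Le_lt_ln.
by rewrite ler_pdivrMr // mulrC -ler_pdivrMr // ltW.
Qed.

Lemma mul_ln_nat_eventually_le (c e : R) : 0 <= c -> 0 < e ->
  exists N, forall n, (N <= n)%N -> c * ln n%:R <= e * n%:R.
Proof.
(* With t = sqrt n > k: c ln n = 2 c ln t < 2 c t = e k t <= e t^2 = e n. *)
move=> c0 e0; set k := 2 * c / e.
exists (Num.truncn (k ^+ 2)).+1 => n Nn.
have k0 : 0 <= k by rewrite divr_ge0 // ?mulr_ge0 // ltW.
have ke : e * k = 2 * c by rewrite mulrC divfK // gt_eqF.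
have k2_lt_n : k ^+ 2 < n%:R by apply: lt_le_trans (truncnS_gt _) _; rewrite ler_nat.
set t := Num.sqrt (n%:R : R).
have nt : n%:R = t ^+ 2 by rewrite sqr_sqrtr // ler0n.
have t0 : 0 < t by rewrite sqrtr_gt0 (le_lt_trans _ k2_lt_n) // sqr_ge0.
have ln_lt : ln (n%:R : R) < 2 * t.
  by rewrite nt lnXn // mulr2n; have := ln_sublinear t0; lra.
have k_lt_t : k < t by move: k2_lt_n; rewrite nt; nra.
have c_ln_le : c * ln n%:R <= c * (2 * t) by rewrite ler_wpM2l // ltW.
have kt_le : e * (k * t) <= e * (t * t) by rewrite ler_wpM2l ?ler_wpM2r // ltW.
rewrite [in e * _]nt expr2; nra.
Qed.

End LnGrowth.

Section GKdimPathAlg.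
Variables (R : realType) (K : fieldType) (V Ed : finType) (s r : Ed -> V).
Local Open Scope ereal_scope.

Lemma GKdim_findim : pathalg_findim s r -> GKdim_pathalg R K s r = 0.
Proof.
move=> /card_paths_le_bounded [C hC]; apply: limn_esup_eq0 => [n|e e0].
  by rewrite lee_fin divr_ge0 // ln_nat_ge0.
have [N hN] := div_ln_nat_eventually_le (ln_nat_ge0 R C) e0.
exists N => n Nn; rewrite lee_fin; apply: le_trans (hN n Nn).
by rewrite ler_wpM2r ?invr_ge0 ?ln_nat_ge0 // ler_ln_nat // dim_VnE hC.
Qed.

Lemma GKdim_ge1 : ~ pathalg_findim s r -> 1 <= GKdim_pathalg R K s r.
Proof.
move=> nf; apply: (@limn_esup_ge _ _ _ 2) => n n2.
have ln_gt0 : (0 < ln (n%:R : R))%R by apply: ln_gt0; rewrite ltr1n.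
rewrite lee_fin ler_pdivlMr // mul1r ler_ln_nat // dim_VnE ltnW //.
exact: card_paths_le_gt.
Qed.

Lemma halg_eq0 : GKdim_pathalg R K s r < +oo -> halg_pathalg R K s r = 0.
Proof.
move=> GK_lty; rewrite /halg_pathalg; case: ifPn => // _.
have [M M0 [N hM]] : exists2 M : R, (0 <= M)%R & exists N, forall n, (N <= n)%N ->
    ((ln (dim_Vn K s r n)%:R / ln n%:R)%:E <= M%:E).
  by apply: limn_esup_fin_eventually_ub => // n; rewrite lee_fin divr_ge0 // ln_nat_ge0.
apply: limn_esup_eq0 => [n|e e0].
  by rewrite lee_fin mulr_ge0 // ?invr_ge0 // ln_nat_ge0.
have [N' hN'] := mul_ln_nat_eventually_le M0 e0.
exists (maxn (maxn N N') 2) => n; rewrite !geq_max => /andP [/andP [Nn N'n] n2].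
have ln_gt0 : (0 < ln (n%:R : R))%R by apply: ln_gt0; rewrite ltr1n.
have := hM n Nn; rewrite lee_fin ler_pdivrMr // => ln_dim_le.
rewrite lee_fin ler_pdivrMl ?ltr0n ?(leq_trans _ n2) // [(_ * e)%R]mulrC.
rewrite (le_trans _ (hN' n N'n)) // (le_trans _ ln_dim_le) //.
exact/ler_ln_nat/dim_grad_le.
Qed.

End GKdimPathAlg.

Theorem theorem5p13 (R : realType) (K : fieldType) (V Ed : finType) (s r : Ed -> V) :
  (GKdim_pathalg R K s r = 0%E <-> pathalg_findim s r) /\
  (GKdim_pathalg R K s r <> 0%E -> (GKdim_pathalg R K s r < +oo)%E ->
     halg_pathalg R K s r = 0%E /\ ~ pathalg_findim s r).
Proof.
split.
  split=> [GK0|]; last exact: GKdim_findim.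
  by apply: contrapT => nf; have := GKdim_ge1 R K nf; rewrite GK0 lee_fin ler10.
move=> GK_neq0 GK_lty; split; first exact: halg_eq0.
by move/(GKdim_findim R K).
Qed.
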